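(* Let $n=3^27^2=441$ and let $\mathcal{D}_{S_1},\mathcal{D}_{S_2}\subseteq\mathcal{D}_{[441]}\setminus\{441\}$ be such that $\mathcal{D}_{S_1}\setminus\mathcal{D}_{S_2}=\{3\}$, $\mathcal{D}_{S_2}\setminus\mathcal{D}_{S_1}=\{9,7,49\}$, and $1\in\mathcal{D}_{S_1}\cap\mathcal{D}_{S_2}$. Then $\mathrm{Spec}(\mathrm{ICG}(441,\mathcal{D}_{S_1}))\neq\mathrm{Spec}(\mathrm{ICG}(441,\mathcal{D}_{S_2}))$.
   Context: Identify $\mathbb{Z}_n$ with $[n]=\{1,\dots,n\}$. For a divisor $d$ of $n$, $G_n(d)=\{j\in[n]:\gcd(j,n)=d\}$; $\mathcal{D}_{[n]}$ is the set of positive divisors of $n$. For $\mathcal{D}\subseteq\mathcal{D}_{[n]}\setminus\{n\}$, $\mathrm{ICG}(n,\mathcal{D})=\mathrm{Cay}(\mathbb{Z}_n,S)$ with $S=\bigcup_{d\in\mathcal{D}}G_n(d)$, and $\mathcal{D}=\mathcal{D}_S$. $\mathrm{Spec}$ is the multiset of adjacency eigenvalues. *)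

From mathcomp Require Import all_boot all_order all_algebra all_field.
Set Implicit Arguments. Unset Strict Implicit. Unset Printing Implicit Defensive.
Import GRing.Theory Num.Theory.
Local Open Scope ring_scope.

(* Z_n is represented by the ordinals 'I_n (residue 0 plays the role of n in
   [n] = {1,...,n}; gcdn 0 n = n = gcd(n,n), so the convention agrees).
   A divisor set D is a boolean predicate on nat. *)

(* S = union of G_n(d), d in D : the residues j with gcd(j,n) in D. *)
Definition ICG_conn (n : nat) (D : pred nat) : pred nat :=
  fun j => D (gcdn (j %% n) n).

Definition ICG_adj (n : nat) (D : pred nat) : 'M[algC]_n :=
  \matrix_(i < n, j < n) (ICG_conn n D ((j + n - i) %% n)%N)%:R.

(* Spectrum as a multiset of eigenvalues: eigenvalue x has multiplicity
   equal to its multiplicity as a root of the characteristic polynomial. *)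
Definition Spec (n : nat) (A : 'M[algC]_n) : algC -> nat :=
  fun x => mup x (char_poly A).

From mathcomp Require Import all_boot all_order all_algebra all_field.
From mathcomp Require Import zify.
Set Implicit Arguments. Unset Strict Implicit. Unset Printing Implicit Defensive.
Import GRing.Theory Num.Theory.

(* The adjacency matrix of a Cayley graph on Z_n is circulant, hence is
   diagonalised by the Fourier matrix, so its characteristic polynomial is the
   product of the X - lambda_k.  Cospectral circulants therefore have the same
   trace of A^3, i.e. the same number of closed walks of length 3.  The
   hypotheses fix D1 and D2 on the divisors of 441 up to the (common)
   membership of 21, 63 and 147, and for each of these 8 choices the numbers
   of closed walks of length 3 differ, as a direct computation shows. *)

Section Circulant.
Local Open Scope ring_scope.
Variable n : nat.
Local Notation N := n.+1.
Variable f : 'I_N -> algC.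

Definition circulant : 'M[algC]_N := \matrix_(i, j) f (j - i).

Lemma mxtrace_circulant_cube :
  \tr (circulant *m circulant *m circulant)
  = (\sum_(a < N) \sum_(b < N) f a * f b * f (- (a + b))) *+ N.
Proof.
set T := \sum_(a < N) _.
rewrite /mxtrace -[X in T *+ X](card_ord N) -sumr_const; apply: eq_bigr => i _.
rewrite !mxE.
under eq_bigr => l _ do rewrite !mxE (reindex_inj (addrI i)) /= mulr_suml.
rewrite exchange_big /=; apply: eq_bigr => a _.
rewrite (reindex_inj (addrI (i + a))) /=; apply: eq_bigr => b _.
by rewrite !mxE addrC addKr [(i + a + b) - (i + a)]addrC addKr -addrA opprD addrA subrr add0r.
Qed.

Variable w : algC.
Hypothesis w_prim : N.-primitive_root w.

Definition circulant_eigenvalue (k : 'I_N) : algC := \sum_(s < N) f s * (w ^+ k) ^+ s.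
Definition fourier_mx : 'M[algC]_N := \matrix_(i, k) (w ^+ k) ^+ i.
Local Notation eigenvalue_mx := (diag_mx (\row_k circulant_eigenvalue k)).

Lemma fourier_mx_unit : fourier_mx \in unitmx.
Proof.
rewrite unitmxE unitfE.
have -> : fourier_mx = Vandermonde N (\row_k w ^+ k) by apply/matrixP => i k; rewrite !mxE.
rewrite det_Vandermonde; apply/prodf_neq0 => i _; apply/prodf_neq0 => j ltij.
rewrite !mxE subr_eq0 eq_sym (eq_prim_root_expr w_prim) !modn_small //.
by rewrite neq_ltn ltij.
Qed.

Lemma circulant_fourier : circulant *m fourier_mx = fourier_mx *m eigenvalue_mx.
Proof.
have wkN (k : nat) : (w ^+ k) ^+ N = 1.
  by rewrite exprAC (prim_expr_order w_prim) expr1n.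
apply/matrixP => i k; rewrite mul_mx_diag !mxE.
rewrite (reindex_inj (addrI i)) /= mulr_sumr; apply: eq_bigr => s _.
rewrite !mxE addrC addKr.
have -> : ((i + s)%R : 'I_N) = ((i + s) %% N)%N :> nat by [].
by rewrite expr_mod ?wkN // exprD mulrCA.
Qed.

Lemma char_poly_circulant :
  char_poly circulant = \prod_(k < N) ('X - (circulant_eigenvalue k)%:P).
Proof.
have -> : \prod_(k < N) ('X - (circulant_eigenvalue k)%:P) = char_poly eigenvalue_mx.
  rewrite char_poly_trig ?diag_mx_is_trig //.
  by apply: eq_bigr => k _; rewrite !mxE eqxx.
set FP := map_mx polyC fourier_mx.
have conj_char : char_poly_mx circulant *m FP = FP *m char_poly_mx eigenvalue_mx.
  by rewrite /char_poly_mx mulmxBl mulmxBr scalar_mxC -!map_mxM circulant_fourier.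
have detFP_neq0 : \det FP != 0.
  by rewrite det_map_mx polyC_eq0 -unitfE -unitmxE fourier_mx_unit.
have := congr1 determinant conj_char; rewrite !det_mulmx.
by rewrite [X in _ = X]mulrC => /(mulIf detFP_neq0).
Qed.

Lemma mxtrace_circulant_cube_eigenvalues :
  \tr (circulant *m circulant *m circulant) = \sum_(k < N) circulant_eigenvalue k ^+ 3.
Proof.
have -> : circulant = fourier_mx *m eigenvalue_mx *m invmx fourier_mx.
  by rewrite -circulant_fourier mulmxK // fourier_mx_unit.
rewrite !mulmxA !mulmxKV ?fourier_mx_unit // mxtrace_mulC !mulmxA.
rewrite mulVmx ?fourier_mx_unit // mul1mx !mulmx_diag mxtrace_diag.
by apply: eq_bigr => k _; rewrite !mxE !exprS expr0 mulr1 mulrA.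
Qed.

Lemma Spec_circulant x :
  Spec circulant x = count_mem x [seq circulant_eigenvalue k | k <- index_enum 'I_N].
Proof. by rewrite /Spec -mu_prod_XsubC big_map char_poly_circulant. Qed.

End Circulant.

Section CirculantSpectrum.
Local Open Scope ring_scope.

Lemma circulant_Spec_closed_walks3 n (f g : 'I_n.+1 -> algC) :
  Spec (circulant f) = Spec (circulant g) ->
  \sum_(a < n.+1) \sum_(b < n.+1) f a * f b * f (- (a + b))
  = \sum_(a < n.+1) \sum_(b < n.+1) g a * g b * g (- (a + b)).
Proof.
move=> eq_Spec; have [w w_prim] := C_prim_root_exists (ltn0Sn n).
have eq_eigenvalues : perm_eq [seq circulant_eigenvalue f w k | k <- index_enum 'I_n.+1]
                              [seq circulant_eigenvalue g w k | k <- index_enum 'I_n.+1].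
  by apply/allP => x _; apply/eqP; rewrite -!Spec_circulant // eq_Spec.
apply/eqP; rewrite -(eqr_pMn2r (ltn0Sn n)) -!mxtrace_circulant_cube.
rewrite !(mxtrace_circulant_cube_eigenvalues _ w_prim).
rewrite -(big_map (circulant_eigenvalue f w) xpredT (fun y => y ^+ 3)).
rewrite -(big_map (circulant_eigenvalue g w) xpredT (fun y => y ^+ 3)).
by rewrite (perm_big _ eq_eigenvalues).
Qed.

End CirculantSpectrum.

Lemma ICG_adj_circulant n (D : pred nat) :
  ICG_adj n.+1 D = circulant (fun s : 'I_n.+1 => (ICG_conn n.+1 D s)%:R%R).
Proof. by apply/matrixP => i j; rewrite !mxE /= modnDmr addnBA // ltnW. Qed.

Lemma eq_ICG_adj n (D1 D2 : pred nat) :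
  0 < n -> {in divisors n, D1 =1 D2} -> ICG_adj n D1 = ICG_adj n D2.
Proof.
move=> n_gt0 eqD; apply/matrixP => i j; rewrite !mxE /ICG_conn eqD //.
by rewrite -dvdn_divisors ?dvdn_gcdr.
Qed.

Lemma nth_rot (T : Type) (x : T) (s : seq T) a i :
  a <= size s -> i < size s -> nth x (rot a s) i = nth x s ((i + a) %% size s).
Proof.
move=> le_a_s lt_i_s; rewrite /rot nth_cat size_drop.
case: ifP => [lt_i|/negbT]; first by rewrite nth_drop modn_small addnC // -ltn_subRL.
rewrite -leqNgt => le_i.
have -> : i + a = (i - (size s - a)) + size s by lia.
by rewrite modnDr modn_small ?nth_take //; lia.
Qed.

Lemma sumn_iota (F : nat -> nat) k : sumn [seq F i | i <- iota 0 k] = \sum_(i < k) F i.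
Proof. by rewrite sumnE big_map -(big_mkord xpredT) /index_iota subn0. Qed.

Lemma sumn_zip_andb (l r : seq bool) k : size l = k -> size r = k ->
  sumn [seq (x.1 && x.2 : nat) | x <- zip l r]
  = \sum_(b < k) (nth false l b && nth false r b : nat).
Proof.
move=> size_l size_r.
have -> : zip l r = [seq (nth false l b, nth false r b) | b <- iota 0 k].
  apply: (@eq_from_nth _ (false, false)).
    by rewrite size_zip size_map size_iota size_l size_r minnn.
  move=> i; rewrite size_zip size_l size_r minnn => lt_i_k.
  by rewrite nth_zip ?size_l ?size_r // (nth_map 0) ?size_iota // nth_iota.
by rewrite -map_comp sumn_iota.
Qed.

Section ClosedWalks.
Variable m : nat.
Local Notation N := m.+1.
Variable c : nat -> bool.

(* Closed walks 0 -> a -> a + b -> 0 in the Cayley graph on Z_N with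
   connection set c. *)
Definition closed_walks3 : nat :=
  \sum_(a < N) \sum_(b < N) c a * c b * c (- (a + b) : 'I_N)%R.

(* The same count in a form that vm_compute evaluates quickly: the values of
   c are listed once, and the b-th entry of rot a r is c (- (a + b)). *)
Definition closed_walks3_seq : nat :=
  let l := [seq c i | i <- iota 0 N] in
  let r := [seq c ((N - i) %% N) | i <- iota 0 N] in
  sumn [seq nth false l a * sumn [seq (x.1 && x.2 : nat) | x <- zip l (rot a r)]
       | a <- iota 0 N].

Lemma closed_walks3_seqE : closed_walks3_seq = closed_walks3.
Proof.
rewrite /closed_walks3_seq sumn_iota; apply: eq_bigr => a _.
rewrite (nth_map 0) ?size_iota // nth_iota // add0n.
rewrite (sumn_zip_andb (k := N)) ?size_rot ?size_map ?size_iota // big_distrr.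
apply: eq_bigr => b _; rewrite -mulnA -mulnb.
rewrite !(nth_map 0) ?size_iota // !nth_iota // add0n.
rewrite nth_rot ?size_map ?size_iota ?(ltnW (ltn_ord a)) //.
by rewrite (nth_map 0) ?size_iota ?ltn_pmod // nth_iota ?ltn_pmod // add0n addnC.
Qed.

Lemma natr_closed_walks3 :
  (closed_walks3%:R = \sum_(a < N) \sum_(b < N)
     (c a)%:R * (c b)%:R * (c (- (a + b) : 'I_N))%:R :> algC)%R.
Proof.
rewrite natr_sum; apply: eq_bigr => a _; rewrite natr_sum.
by apply: eq_bigr => b _; rewrite !natrM.
Qed.

End ClosedWalks.

Lemma ICG_Spec_closed_walks3 n (D1 D2 : pred nat) :
  Spec (ICG_adj n.+1 D1) = Spec (ICG_adj n.+1 D2) ->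
  closed_walks3 n (ICG_conn n.+1 D1) = closed_walks3 n (ICG_conn n.+1 D2).
Proof.
rewrite !ICG_adj_circulant => /circulant_Spec_closed_walks3 eq_walks.
by apply/eqP; rewrite -(eqr_nat algC) !natr_closed_walks3 eq_walks.
Qed.

(* [second = false] gives D1, [second = true] gives D2. *)
Definition D441 (b21 b63 b147 second : bool) : pred nat := fun d =>
  [|| d == 1, if second then d \in [:: 9; 7; 49] else d == 3,
      (d == 21) && b21, (d == 63) && b63 | (d == 147) && b147].

Lemma divisors441 : divisors 441 = [:: 1; 3; 7; 9; 21; 49; 63; 147; 441].
Proof. by []. Qed.

Lemma D441_spec (D1 D2 : pred nat) :
  (forall d, D1 d -> (d %| 441) /\ d != 441) ->
  (forall d, D2 d -> (d %| 441) /\ d != 441) ->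
  (forall d, (D1 d && ~~ D2 d) = (d == 3)) ->
  (forall d, (D2 d && ~~ D1 d) = (d \in [:: 9; 7; 49])) ->
  D1 1 && D2 1 ->
  {in divisors 441, D1 =1 D441 (D1 21) (D1 63) (D1 147) false} /\
  {in divisors 441, D2 =1 D441 (D1 21) (D1 63) (D1 147) true}.
Proof.
move=> D1_div D2_div D1_D2 D2_D1 /andP[D1_1 D2_1].
have D1_441 : D1 441 = false by apply/negP => /D1_div[_ /eqP].
have D2_441 : D2 441 = false by apply/negP => /D2_div[_ /eqP].
have /andP[D1_3 /negbTE D2_3] : D1 3 && ~~ D2 3 by rewrite D1_D2.
have only_D2 d : d \in [:: 9; 7; 49] -> D2 d && ~~ D1 d by rewrite D2_D1.
have /andP[D2_9 /negbTE D1_9] := only_D2 9 isT.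
have /andP[D2_7 /negbTE D1_7] := only_D2 7 isT.
have /andP[D2_49 /negbTE D1_49] := only_D2 49 isT.
have D2_D1_eq d : d \notin [:: 3; 9; 7; 49] -> D2 d = D1 d.
  move=> d_off; have := D1_D2 d; have := D2_D1 d.
  case: (D1 d); case: (D2 d) => //=; [move=> _ /esym e | move=> /esym e _];
    by move: d_off; rewrite in_cons e ?orbT.
have all_eq (D D' : pred nat) :
    all (fun d => D d == D' d) (divisors 441) -> {in divisors 441, D =1 D'}.
  by move=> /allP eqD d /eqD /eqP.
split; apply: all_eq; rewrite divisors441.
- rewrite /= /D441 /= D1_1 D1_3 D1_7 D1_9 D1_49 D1_441.
  by case: (D1 21); case: (D1 63); case: (D1 147).
- rewrite /= /D441 /= D2_1 D2_3 D2_7 D2_9 D2_49 D2_441 !D2_D1_eq //.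
  by case: (D1 21); case: (D1 63); case: (D1 147).
Qed.

Lemma closed_walks3_D441_neq b21 b63 b147 :
  closed_walks3_seq 440 (ICG_conn 441 (D441 b21 b63 b147 false))
  != closed_walks3_seq 440 (ICG_conn 441 (D441 b21 b63 b147 true)).
Proof. by case: b21; case: b63; case: b147; vm_compute. Qed.

Theorem lemma3p26 (D1 D2 : pred nat) :
  (forall d, D1 d -> (d %| 441)%N /\ d != 441%N) ->
  (forall d, D2 d -> (d %| 441)%N /\ d != 441%N) ->
  (forall d, (D1 d && ~~ D2 d) = (d == 3%N)) ->
  (forall d, (D2 d && ~~ D1 d) = (d \in [:: 9; 7; 49]%N)) ->
  D1 1%N && D2 1%N ->
  Spec (ICG_adj 441 D1) <> Spec (ICG_adj 441 D2).
Proof.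
move=> D1_div D2_div D1_D2 D2_D1 D12_1.
have [D1E D2E] := D441_spec D1_div D2_div D1_D2 D2_D1 D12_1.
rewrite (eq_ICG_adj _ D1E) // (eq_ICG_adj _ D2E) // => /ICG_Spec_closed_walks3.
by rewrite -!closed_walks3_seqE; apply/eqP; apply: closed_walks3_D441_neq.
Qed.
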